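(* Assume the setting and conditions below. Then for almost every $\omega\in\Omega$ the function $\theta\mapsto\max_{W\in\mathcal W}F(W,H(\theta,\omega))$ is Fréchet differentiable on $\Theta$, and at each $\theta\in\Theta$ its gradient equals $\nabla_\theta F(W,H(\theta,\omega))|_{W=W^*(\theta,\omega)}$ for every $W^*(\theta,\omega)\in\arg\max_{W\in\mathcal W}F(W,H(\theta,\omega))$, irrespective of the choice of this maximizer.
   Context: Let $\omega$ be a random element with values in $\Omega$; let $K,M$ be positive integers, $M_U=MK$, $S$ a positive integer, $\Theta\subset\mathbb R^S$ compact convex, $\mathcal U\supset\Theta$ open, $H:\mathcal U\times\Omega\to\mathbb C^{M_U}$, $H=\mathrm{vec}(h_1,\dots,h_K)$ with $h_k\in\mathbb C^M$. Let $P>0$ and $\mathcal W=\{W\in\mathbb C^{M_U}:\|W\|^2\le P\}$, $W=\mathrm{vec}(w_1,\dots,w_K)$. $F$ is the weighted sumrate $F(W,H)=\sum_{k=1}^K\alpha_k\log_2\big(1+\frac{|h_k^{\mathsf H}w_k|^2}{\sum_{j\ne k}|h_k^{\mathsf H}w_j|^2+\sigma_k^2}\big)$ with $\alpha_k\ge0$, $\sigma_k^2>0$. Conditions: (A3) there are constants $B_H,L_{H,0},L_{H,1}$ such that for a.e. $\omega$, $H(\cdot,\omega)$ is bounded by $B_H$ on $\Theta$, twice continuously differentiable on $\mathcal U$, $L_{H,0}$-Lipschitz with $L_{H,1}$-Lipschitz gradient on $\Theta$; $H(\cdot,\omega)$ is real-analytic on $\mathcal U$ for a.e. $\omega$; strong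 second-order sufficient optimality: for every $\theta\in\Theta$, a.e. $\omega$ and every maximizer $W^*$ of $F(\cdot,H(\theta,\omega))$ over $\mathcal W$, with Lagrangian $L(W,\lambda;\theta,\omega)=F(W,H(\theta,\omega))+\lambda(\|W\|^2-P)$, there is $\lambda^*\ge0$ with strict complementarity ($\lambda^*>0$ if $\|W^*\|^2=P$, $\lambda^*=0$ otherwise) and $\nabla^2_WL(W^*,\lambda^*;\theta,\omega)$ nonsingular. Further, $\Theta''$ compact and $\Theta'$ open with $\mathcal U\supset\Theta''\supset\Theta'\supset\Theta$, and there are $\eta>0$ and a positive function $C(\theta)$ uniformly bounded on $\Theta''$ such that for a.e. $\omega$ and all $(\theta,W)\in\mathcal U\times\mathcal W$: $\mathrm{dist}(W,\arg\max_{V\in\mathcal W}F(V,H(\theta,\omega)))\le C(\theta)\big(\max_{V\in\mathcal W}F(V,H(\theta,\omega))-F(W,H(\theta,\omega))\big)^\eta$. *)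

From mathcomp Require Import all_boot all_order all_algebra.
From mathcomp Require Import all_classical all_reals all_analysis.
Import Order.TTheory GRing.Theory Num.Theory.
Import numFieldNormedType.Exports.

Set Implicit Arguments.
Unset Strict Implicit.
Unset Printing Implicit Defensive.

Local Open Scope classical_set_scope.
Local Open Scope ring_scope.

Section Defs.
Variable R : realType.

(* A complex K x M array, stored as (real part, imaginary part).
   Row k (k : 'I_K) is the complex vector h_k (resp. w_k) in C^M, so that
   an element of cmat K M is vec(h_1,...,h_K) in C^(M K). *)
Definition cmat (K M : nat) := ('M[R]_(K, M) * 'M[R]_(K, M))%type.

Definition csqnorm K M (X : cmat K M) : R :=
  \sum_(k < K) \sum_(m < M) (X.1 k m ^+ 2 + X.2 k m ^+ 2).
Definition cnorm K M (X : cmat K M) : R := Num.sqrt (csqnorm X).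

Definition rnorm n (t : 'rV[R]_n) : R := Num.sqrt (\sum_(i < n) t 0 i ^+ 2).

(* |h_k^H w_j|^2 with h^H w = sum_m conj(h_m) w_m *)
Definition herm_re K M (H W : cmat K M) (k j : 'I_K) : R :=
  \sum_(m < M) (H.1 k m * W.1 j m + H.2 k m * W.2 j m).
Definition herm_im K M (H W : cmat K M) (k j : 'I_K) : R :=
  \sum_(m < M) (H.1 k m * W.2 j m - H.2 k m * W.1 j m).
Definition herm_abs2 K M (H W : cmat K M) (k j : 'I_K) : R :=
  herm_re H W k j ^+ 2 + herm_im H W k j ^+ 2.

Definition log2 (x : R) : R := ln x / ln 2.

Definition sumrate K M (alpha sigma2 : 'I_K -> R) (W H : cmat K M) : R :=
  \sum_(k < K) alpha k *
    log2 (1 + herm_abs2 H W k k /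
              (\sum_(j < K | j != k) herm_abs2 H W k j + sigma2 k)).

Definition Wset K M (P : R) : set (cmat K M) := [set W | csqnorm W <= P].
Arguments Wset K M P _ : clear implicits.

Definition maxval K M (F : cmat K M -> cmat K M -> R) (P : R) (H : cmat K M) : R :=
  sup [set F V H | V in Wset K M P].
Definition argmax K M (F : cmat K M -> cmat K M -> R) (P : R) (H : cmat K M)
  : set (cmat K M) :=
  [set W | Wset K M P W /\ forall V, Wset K M P V -> F V H <= F W H].

Definition cdist K M (W : cmat K M) (A : set (cmat K M)) : R :=
  inf [set cnorm (W - V) | V in A].

Definition lagrangian K M (F : cmat K M -> cmat K M -> R) (P : R)
  (W : cmat K M) (lam : R) (H : cmat K M) : R :=
  F W H + lam * (csqnorm W - P).

(* real coordinates of C^(M K) = R^(2 M K): (part, k, m), part 0 = Re, 1 = Im *)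
Definition cidx K M := ('I_2 * 'I_K * 'I_M)%type.
Definition cbasis K M (c : cidx K M) : cmat K M :=
  let: (b, k, m) := c in
  if b == ord0 then (delta_mx k m, 0) else (0, delta_mx k m).

Definition hessian K M (f : cmat K M -> R) (W : cmat K M)
  : 'M[R]_(#|{: cidx K M}|) :=
  \matrix_(i, j) 'D_(cbasis (enum_val i)) ('D_(cbasis (enum_val j)) f) W.

Definition C2_on n (V : normedModType R) (U : set 'rV[R]_n) (f : 'rV[R]_n -> V) :=
  [/\ forall x, U x -> differentiable f x,
      forall v x, U x -> differentiable ('D_v f) x &
      forall u v x, U x -> {for x, continuous ('D_u ('D_v f))}].

(* real-analytic on U: around every point of U, f is the sum of an absolutely
   convergent power series (terms grouped by total degree n, with coefficient
   tensors c n : {ffun 'I_n -> 'I_S} -> V). *)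
Definition real_analytic_on n (V : normedModType R) (U : set 'rV[R]_n)
  (f : 'rV[R]_n -> V) :=
  forall x0, U x0 ->
  exists (c : forall d : nat, {ffun 'I_d -> 'I_n} -> V) (r : R), 0 < r /\
  forall h : 'rV[R]_n, rnorm h < r ->
    (fun N => \sum_(d < N) \sum_(i : {ffun 'I_d -> 'I_n})
                 (\prod_(l < d) h 0 (i l)) *: c d i) @ \oo --> f (x0 + h)
    /\ exists l : R,
    (fun N => \sum_(d < N) \sum_(i : {ffun 'I_d -> 'I_n})
                 `|\prod_(l < d) h 0 (i l)| * `|c d i|) @ \oo --> l.

End Defs.
Arguments Wset {R} K M P _.

From HB Require Import structures.
From mathcomp Require Import all_boot all_order all_algebra.
From mathcomp Require Import all_classical all_reals all_analysis.
From mathcomp Require Import ring lra.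
Import Order.TTheory GRing.Theory Num.Theory.
Import numFieldNormedType.Exports.
Local Open Scope classical_set_scope.
Local Open Scope ring_scope.

Set Implicit Arguments.
Unset Strict Implicit.
Unset Printing Implicit Defensive.

(* Fix omega and theta, write H_s = H(s, omega), X0 = H_theta, and let W0
   maximize F(., X0) over the feasible ball.  If V_s maximizes F(., H_s), then
   F(V_s, X0) <= F(W0, X0) gives
     0 <= max F(., H_s) - F(W0, H_s)
       <= F(V_s, H_s) - F(V_s, X0) - F(W0, H_s) + F(W0, X0),
   and this mixed second difference is o(|H_s - X0|) = o(|s - theta|) provided
   V_s can be chosen close to W0.  That is where the error bound enters: by
   uniform continuity of F on the compact ball the optimality gap of W0 at H_s
   tends to 0, hence so does the distance from W0 to the maximizers at H_s.
   The o(|X - X0|) bound on mixed differences, uniform for W near W0, holds for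
   every function built from coordinates by sums, products and logarithms of
   positive functions, in particular for the sum rate.  Among the hypotheses of
   the statement only the differentiability of H(., omega) and the error bound
   (with its bounded constant) are needed. *)

Lemma differentiable_lipschitz (R : realType) (Z Y : normedModType R) (h : Z -> Y) t :
  differentiable h t ->
  exists2 c : R, 0 < c & \forall s \near t, `|h s - h t| <= c * `|s - t|.
Proof.
move=> hd; have [k k0 hk] := linear_lipschitz (diff_continuous hd).
exists (k + 1); first by rewrite ltr_wpDl // ltW.
have /eqaddoP /(_ 1 ltr01) := diff_locally hd.
rewrite near_simpl; move=> /nbhs_ballP [r r0 Hr].
apply/nbhs_ballP; exists r => // s ts.
have /Hr : ball 0 r (s - t).
  by move: ts; rewrite -!ball_normE /= sub0r normrN distrC.
rewrite /= !fctE subrK mul1r => hs.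
have -> : h s - h t = (h s - (h t + 'd h t (s - t))) + 'd h t (s - t).
  by rewrite opprD addrA subrK.
by apply: le_trans (ler_normD _ _) _; rewrite mulrDl mul1r addrC lerD.
Qed.

Lemma ln_lipschitz (R : realType) (m x y : R) : 0 < m -> m <= x -> m <= y ->
  `|ln x - ln y| <= `|x - y| / m.
Proof.
move=> m0 mx my.
suff key u v : m <= u -> m <= v -> ln u - ln v <= `|u - v| / m.
  by rewrite ler_norml key // andbT lerNl opprB distrC key.
move=> mu mv; have u0 := lt_le_trans m0 mu; have v0 := lt_le_trans m0 mv.
rewrite -ln_div ?posrE //.
apply: le_trans (_ : (u - v) / v <= _).
  have -> : u / v = 1 + (u - v) / v by field; rewrite gt_eqF.
  apply: le_ln1Dx; rewrite mulrBl divff ?gt_eqF //.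
  by have := divr_gt0 u0 v0; lra.
apply: le_trans (_ : `|u - v| / v <= _).
  by apply: ler_wpM2r; [rewrite invr_ge0 ltW | exact: ler_norm].
by rewrite ler_wpM2l // lef_pV2 ?posrE.
Qed.

Lemma normrM_le (R : numDomainType) (x y a b : R) :
  `|x| <= a -> `|y| <= b -> `|x * y| <= a * b.
Proof. by move=> xa yb; rewrite normrM ler_pM. Qed.

Lemma nonexpansive_continuous (R : realType) (V W : normedModType R) (f : V -> W) :
  (forall x y, `|f x - f y| <= `|x - y|) -> continuous f.
Proof.
move=> fl x; apply/cvgrPdist_le => e e0; near=> y.
apply: le_trans (fl x y) _; near: y.
exact: (cvgr_dist_le _ _ cvg_id _ e0).
Unshelve. all: by end_near.
Qed.

Section DanskinRegular.
Variables (R : realType) (U V : normedModType R) (W0 : U) (X0 : V).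
Implicit Types (f g : U -> V -> R) (P : set (U * V)).

Lemma near_fix_snd P :
  (\forall p \near (W0, X0), P p) -> \forall p \near (W0, X0), P (p.1, X0).
Proof.
move=> [[A B] /= [nA nB] AB]; exists (A, B) => //= -[x y] [/= Ax _].
by apply: AB; split => //; exact: nbhs_singleton.
Qed.

Lemma near_fix_fst P :
  (\forall p \near (W0, X0), P p) -> \forall p \near (W0, X0), P (W0, p.2).
Proof.
move=> [[A B] /= [nA nB] AB]; exists (A, B) => //= -[x y] [/= _ By].
by apply: AB; split => //; exact: nbhs_singleton.
Qed.

Lemma near_snd (Q : set V) :
  (\forall X \near X0, Q X) -> \forall p \near (W0, X0), Q p.2.
Proof. exact: cvg_snd. Qed.

Definition jointly_continuous f := {for (W0, X0), continuous (fun p => f p.1 p.2)}.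

Definition snd_lipschitz f := exists2 c : R, 0 < c &
  \forall p \near (W0, X0), `|f p.1 p.2 - f p.1 X0| <= c * `|p.2 - X0|.

Definition mixed_diff f (p : U * V) := f p.1 p.2 - f p.1 X0 - f W0 p.2 + f W0 X0.

Definition mixed_diff_littleo f := forall e : R, 0 < e ->
  \forall p \near (W0, X0), `|mixed_diff f p| <= e * `|p.2 - X0|.

(* The second component is needed only to make the class closed under
   products and logarithms. *)
Definition danskin_regular f := [/\ jointly_continuous f, snd_lipschitz f,
  mixed_diff_littleo f & differentiable (f W0) X0].

Lemma jointly_continuous_near f (e : R) : jointly_continuous f -> 0 < e ->
  \forall p \near (W0, X0), `|f p.1 p.2 - f W0 X0| <= e.
Proof.
by move=> fc e0; apply: filterS (cvgr_dist_le _ _ fc _ e0) => p; rewrite distrC.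
Qed.

Lemma jointly_continuous_bounded f : jointly_continuous f ->
  \forall p \near (W0, X0), `|f p.1 p.2| <= `|f W0 X0| + 1.
Proof.
move=> fc; apply: filterS (jointly_continuous_near fc ltr01) => p h.
rewrite -[f p.1 p.2](subrK (f W0 X0)) addrC.
by apply: le_trans (ler_normD _ _) _; rewrite lerD2l.
Qed.

Lemma jointly_continuous_pos f : 0 < f W0 X0 -> jointly_continuous f ->
  \forall p \near (W0, X0), f W0 X0 / 2 <= f p.1 p.2.
Proof.
move=> f0 fc; have f2 : 0 < f W0 X0 / 2 by rewrite divr_gt0.
apply: filterS (jointly_continuous_near fc f2) => p.
by rewrite ler_norml => /andP[+ _]; lra.
Qed.

Lemma jointly_continuous_fix_snd f : jointly_continuous f ->
  {for W0, continuous (fun W => f W X0)}.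
Proof.
move=> fc; apply: (continuous_comp (f := fun W => (W, X0))) fc.
by apply: cvg_pair; [exact: cvg_id | exact: cvg_cst].
Qed.

Lemma danskin_regular_cst c : danskin_regular (fun _ _ => c).
Proof.
split.
- exact: cst_continuous.
- by exists 1 => //; near=> p; rewrite subrr normr0 mul1r.
- move=> e e0; near=> p; rewrite [mixed_diff _ _](_ : _ = 0) ?normr0.
    by rewrite mulr_ge0 // ltW.
  by rewrite /mixed_diff /=; ring.
- exact: differentiable_cst.
Unshelve. all: by end_near.
Qed.

Lemma danskin_regular_fst (g : U -> R) :
  {for W0, continuous g} -> danskin_regular (fun W _ => g W).
Proof.
move=> gc; split.
- by apply: continuous_comp gc; exact: cvg_fst.
- by exists 1 => //; near=> p; rewrite subrr normr0 mul1r.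
- move=> e e0; near=> p; rewrite [mixed_diff _ _](_ : _ = 0) ?normr0.
    by rewrite mulr_ge0 // ltW.
  by rewrite /mixed_diff /=; ring.
- exact: differentiable_cst.
Unshelve. all: by end_near.
Qed.

Lemma danskin_regular_snd (g : V -> R) :
  differentiable g X0 -> danskin_regular (fun _ X => g X).
Proof.
move=> gd; split.
- by apply: continuous_comp (differentiable_continuous gd); exact: cvg_snd.
- have [c c0 gc] := differentiable_lipschitz gd.
  by exists c => //; exact: near_snd gc.
- move=> e e0; near=> p; rewrite [mixed_diff _ _](_ : _ = 0) ?normr0.
    by rewrite mulr_ge0 // ltW.
  by rewrite /mixed_diff /=; ring.
- exact: gd.
Unshelve. all: by end_near.
Qed.

Lemma snd_lipschitz_mul f g : jointly_continuous f -> jointly_continuous g ->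
  snd_lipschitz f -> snd_lipschitz g -> snd_lipschitz (fun W X => f W X * g W X).
Proof.
move=> fc gc [cf cf0 fl] [cg cg0 gl].
exists (cf * (`|g W0 X0| + 1) + (`|f W0 X0| + 1) * cg).
  by rewrite addr_gt0 // mulr_gt0 // ltr_wpDl.
near=> p.
have fl1 : `|f p.1 p.2 - f p.1 X0| <= cf * `|p.2 - X0| by near: p.
have gl1 : `|g p.1 p.2 - g p.1 X0| <= cg * `|p.2 - X0| by near: p.
have gb : `|g p.1 p.2| <= `|g W0 X0| + 1.
  by near: p; exact: jointly_continuous_bounded.
have fb : `|f p.1 X0| <= `|f W0 X0| + 1.
  by near: p; exact: near_fix_snd (jointly_continuous_bounded fc).
have -> : f p.1 p.2 * g p.1 p.2 - f p.1 X0 * g p.1 X0 =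
    (f p.1 p.2 - f p.1 X0) * g p.1 p.2 + f p.1 X0 * (g p.1 p.2 - g p.1 X0).
  by ring.
have := ler_normD ((f p.1 p.2 - f p.1 X0) * g p.1 p.2)
  (f p.1 X0 * (g p.1 p.2 - g p.1 X0)).
have := normrM_le fl1 gb; have := normrM_le fb gl1; lra.
Unshelve. all: by end_near.
Qed.

Lemma mixed_diff_littleo_mul f g :
  jointly_continuous f -> jointly_continuous g ->
  snd_lipschitz f -> snd_lipschitz g ->
  mixed_diff_littleo f -> mixed_diff_littleo g ->
  mixed_diff_littleo (fun W X => f W X * g W X).
Proof.
move=> fc gc [cf cf0 fl] [cg cg0 gl] fm gm e e0.
set d := f W0 X0; set d' := g W0 X0.
pose C := `|d'| + 1 + `|d| + cg + 2 * cf.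
have C0 : 0 < C by rewrite /C; have := normr_ge0 d; have := normr_ge0 d'; lra.
have e1 : 0 < e / C by rewrite divr_gt0.
near=> p.
have fm1 : `|mixed_diff f p| <= e / C * `|p.2 - X0| by near: p; exact: fm.
have gm1 : `|mixed_diff g p| <= e / C * `|p.2 - X0| by near: p; exact: gm.
have gb : `|g p.1 p.2| <= `|d'| + 1.
  by near: p; exact: jointly_continuous_bounded.
have fX0 : `|f p.1 X0 - d| <= e / C.
  by near: p; exact: near_fix_snd (jointly_continuous_near fc e1).
have gl1 : `|g p.1 p.2 - g p.1 X0| <= cg * `|p.2 - X0| by near: p.
have fW0 : `|f W0 p.2 - d| <= cf * `|p.2 - X0| by near: p; exact: near_fix_fst fl.
have gW0 : `|g p.1 p.2 - g W0 p.2| <= 2 * (e / C).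
  have g1 : `|g p.1 p.2 - d'| <= e / C.
    by near: p; exact: jointly_continuous_near gc e1.
  have g2 : `|g W0 p.2 - d'| <= e / C.
    by near: p; exact: near_fix_fst (jointly_continuous_near gc e1).
  have -> : g p.1 p.2 - g W0 p.2 = (g p.1 p.2 - d') - (g W0 p.2 - d') by ring.
  by apply: le_trans (ler_normB _ _) _; lra.
have -> : mixed_diff (fun W X => f W X * g W X) p =
    mixed_diff f p * g p.1 p.2 + mixed_diff g p * d +
    (f p.1 X0 - d) * (g p.1 p.2 - g p.1 X0) +
    (f W0 p.2 - d) * (g p.1 p.2 - g W0 p.2).
  by rewrite /mixed_diff /= /d /d'; ring.
apply: (le_trans (y := e / C * C * `|p.2 - X0|)); last by rewrite divfK ?gt_eqF.
have := normrM_le fm1 gb; have := normrM_le gm1 (lexx `|d|).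
have := normrM_le fX0 gl1; have := normrM_le fW0 gW0.
set A := mixed_diff f p * _; set B := mixed_diff g p * _.
set D := (f p.1 X0 - d) * _; set E := (f W0 p.2 - d) * _.
have := ler_normD (A + B + D) E; have := ler_normD (A + B) D.
have := ler_normD A B; rewrite /C; lra.
Unshelve. all: by end_near.
Qed.

Lemma snd_lipschitz_ln f : 0 < f W0 X0 -> jointly_continuous f ->
  snd_lipschitz f -> snd_lipschitz (fun W X => ln (f W X)).
Proof.
move=> f0 fc [c c0 fl]; have f2 : 0 < f W0 X0 / 2 by rewrite divr_gt0.
have fpos := jointly_continuous_pos f0 fc.
exists (c / (f W0 X0 / 2)); first by rewrite divr_gt0.
near=> p.
have fl1 : `|f p.1 p.2 - f p.1 X0| <= c * `|p.2 - X0| by near: p.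
have f1 : f W0 X0 / 2 <= f p.1 p.2 by near: p.
have fX0 : f W0 X0 / 2 <= f p.1 X0 by near: p; exact: near_fix_snd fpos.
apply: le_trans (ln_lipschitz f2 f1 fX0) _.
by rewrite mulrAC ler_wpM2r // invr_ge0 ltW.
Unshelve. all: by end_near.
Qed.

Lemma mixed_diff_littleo_ln f : 0 < f W0 X0 -> jointly_continuous f ->
  snd_lipschitz f -> mixed_diff_littleo f ->
  mixed_diff_littleo (fun W X => ln (f W X)).
Proof.
move=> f0 fc [c c0 fl] fm e e0; have fpos := jointly_continuous_pos f0 fc.
set d := f W0 X0 in f0 fpos *.
pose q := d * d / 4; have q0 : 0 < q by rewrite divr_gt0 // mulr_gt0.
have [e1 e10 eq1] : exists2 e1, 0 < e1 & e1 * (d + c) = e * q.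
  have dc0 : 0 < d + c by rewrite addr_gt0.
  by exists (e * q / (d + c)); rewrite ?divfK ?gt_eqF // divr_gt0 ?mulr_gt0.
near=> p.
have f1 : d / 2 <= f p.1 p.2 by near: p.
have fX0 : d / 2 <= f p.1 X0 by near: p; exact: near_fix_snd fpos.
have fW0 : d / 2 <= f W0 p.2 by near: p; exact: near_fix_fst fpos.
have fm1 : `|mixed_diff f p| <= e1 * `|p.2 - X0| by near: p; exact: fm.
have dX0 : `|f p.1 X0 - d| <= e1.
  by near: p; exact: near_fix_snd (jointly_continuous_near fc e10).
have dW0 : `|f W0 p.2 - d| <= c * `|p.2 - X0| by near: p; exact: near_fix_fst fl.
have qa : q <= f p.1 p.2 * d by rewrite /q; nra.
have qb : q <= f p.1 X0 * f W0 p.2 by rewrite /q; nra.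
have -> : mixed_diff (fun W X => ln (f W X)) p =
    ln (f p.1 p.2 * d) - ln (f p.1 X0 * f W0 p.2).
  by rewrite /mixed_diff /= !lnM ?posrE; [rewrite /d; ring | lra ..].
apply: le_trans (ln_lipschitz q0 qa qb) _; rewrite ler_pdivrMr //.
have -> : f p.1 p.2 * d - f p.1 X0 * f W0 p.2 =
    mixed_diff f p * d - (f p.1 X0 - d) * (f W0 p.2 - d).
  by rewrite /mixed_diff /d; ring.
have := ler_normB (mixed_diff f p * d) ((f p.1 X0 - d) * (f W0 p.2 - d)).
have := normrM_le fm1 (lexx `|d|); have := normrM_le dX0 dW0.
rewrite [`|d|]gtr0_norm // [e * _ * q]mulrAC -eq1; lra.
Unshelve. all: by end_near.
Qed.

Lemma danskin_regular_add f g : danskin_regular f -> danskin_regular g ->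
  danskin_regular (fun W X => f W X + g W X).
Proof.
move=> [fc [cf cf0 fl] fm fd] [gc [cg cg0 gl] gm gd]; split.
- exact: cvgD fc gc.
- exists (cf + cg); first by rewrite addr_gt0.
  near=> p.
  have fl1 : `|f p.1 p.2 - f p.1 X0| <= cf * `|p.2 - X0| by near: p.
  have gl1 : `|g p.1 p.2 - g p.1 X0| <= cg * `|p.2 - X0| by near: p.
  rewrite opprD addrACA.
  by apply: le_trans (ler_normD _ _) _; lra.
- move=> e e0; have e2 : 0 < e / 2 by rewrite divr_gt0.
  near=> p.
  have fm1 : `|mixed_diff f p| <= e / 2 * `|p.2 - X0| by near: p; exact: fm.
  have gm1 : `|mixed_diff g p| <= e / 2 * `|p.2 - X0| by near: p; exact: gm.
  have -> : mixed_diff (fun W X => f W X + g W X) p = mixed_diff f p + mixed_diff g p.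
    by rewrite /mixed_diff /=; ring.
  by apply: le_trans (ler_normD _ _) _; lra.
- exact: differentiableD fd gd.
Unshelve. all: by end_near.
Qed.

Lemma danskin_regular_mul f g : danskin_regular f -> danskin_regular g ->
  danskin_regular (fun W X => f W X * g W X).
Proof.
move=> [fc fl fm fd] [gc gl gm gd]; split.
- exact: cvgM fc gc.
- exact: snd_lipschitz_mul.
- exact: mixed_diff_littleo_mul.
- exact: differentiableM fd gd.
Qed.

Lemma danskin_regular_opp f : danskin_regular f ->
  danskin_regular (fun W X => - f W X).
Proof.
have -> : (fun W X => - f W X) = (fun W X => -1 * f W X).
  by apply/funext => W; apply/funext => X; rewrite mulN1r.
exact/danskin_regular_mul/danskin_regular_cst.
Qed.

Lemma danskin_regular_ln f : 0 < f W0 X0 -> danskin_regular f ->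
  danskin_regular (fun W X => ln (f W X)).
Proof.
move=> f0 [fc fl fm fd]; split.
- exact: continuous_comp fc (continuous_ln f0).
- exact: snd_lipschitz_ln.
- exact: mixed_diff_littleo_ln.
- apply: differentiable_comp fd _; apply/derivable1_diffP/ex_derive.
  exact: is_derive1_ln.
Qed.

Lemma danskin_regular_sum n (F : 'I_n -> U -> V -> R) :
  (forall i, danskin_regular (F i)) ->
  danskin_regular (fun W X => \sum_(i < n) F i W X).
Proof.
elim: n F => [|n IH] F FR.
  by under eq_fun do under eq_fun do rewrite big_ord0; exact: danskin_regular_cst.
under eq_fun do under eq_fun do rewrite big_ord_recr.
by apply: danskin_regular_add; [apply: IH => i|]; exact: FR.
Qed.

End DanskinRegular.

Section Danskin.
Variables (R : realType) (U V Z : normedModType R).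

Lemma differentiable_littleo (Y : normedModType R) (g : Z -> Y) t : g t = 0 ->
  (forall e : R, 0 < e -> \forall s \near t, `|g s| <= e * `|s - t|) ->
  differentiable g t /\ 'd g t = 0 :> (Z -> Y).
Proof.
move=> gt0 go.
have gE : g \o shift t = cst (g t) + \0 +o_ (0 : Z) id.
  apply/eqaddoP => e e0; have /nbhs_ballP [r r0 gr] := go e e0.
  apply/nbhs_ballP; exists r => // v; rewrite -ball_normE /= sub0r normrN => vr.
  rewrite !fctE gt0 addr0 subr0 -[v in leRHS](addrK t).
  by apply: gr; rewrite -ball_normE /= (addrC v) opprD addrA subrr sub0r normrN.
have dg0 : 'd g t = 0 :> (Z -> Y).
  by apply/diff_unique => // ?; exact: cvg_cst.
split => //; apply/diff_locallyP; rewrite dg0; split => //; exact: cst_continuous.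
Qed.

Definition is_maximizer (A : set U) (f : U -> V -> R) (X : V) (W : U) :=
  A W /\ forall W', A W' -> f W' X <= f W X.

Lemma sup_maximizer A f X W :
  is_maximizer A f X W -> sup [set f W' X | W' in A] = f W X.
Proof.
move=> [AW Wmax]; apply/le_anti/andP; split.
  by apply: ge_sup; [exists (f W X), W | move=> _ [W' AW' <-]; exact: Wmax].
apply: sup_upper_bound; last by exists W.
by split; [exists (f W X), W | exists (f W X) => _ [W' AW' <-]; exact: Wmax].
Qed.

Lemma danskin (A : set U) (f : U -> V -> R) (h : Z -> V) t W0 :
  differentiable h t -> differentiable (f W0) (h t) ->
  mixed_diff_littleo W0 (h t) f -> is_maximizer A f (h t) W0 ->
  (forall d : R, 0 < d -> \forall s \near t,
     exists2 W, is_maximizer A f (h s) W & `|W - W0| < d) ->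
  differentiable (fun s => sup [set f W (h s) | W in A]) t /\
  'd (fun s => sup [set f W (h s) | W in A]) t = 'd (fun s => f W0 (h s)) t
    :> (Z -> R).
Proof.
move=> hd fd fm W0max near_max.
have [L L0 hL] := differentiable_lipschitz hd.
pose g s := sup [set f W (h s) | W in A] - f W0 (h s).
have g_littleo (e : R) : 0 < e -> \forall s \near t, `|g s| <= e * `|s - t|.
  move=> e0; have [[A' B] /= [nA' nB] A'B] := fm (e / L) (divr_gt0 e0 L0).
  have /nbhs_ballP [d d0 dA'] := nA'.
  near=> s.
  have [W Wmax Wd] : exists2 W, is_maximizer A f (h s) W & `|W - W0| < d.
    by near: s; exact: near_max.
  have hsB : B (h s) by near: s; exact: (differentiable_continuous hd).
  have hsL : `|h s - h t| <= L * `|s - t| by near: s.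
  have mix : `|mixed_diff W0 (h t) f (W, h s)| <= e / L * `|h s - h t|.
    by apply: (A'B (W, h s)); split => //; apply: dA'; rewrite -ball_normE /= distrC.
  have fWt : f W (h t) <= f W0 (h t) by apply: W0max.2; exact: Wmax.1.
  have fW0s : f W0 (h s) <= f W (h s) by apply: Wmax.2; exact: W0max.1.
  rewrite /g (sup_maximizer Wmax) ger0_norm ?subr_ge0 //.
  have mixL : e / L * `|h s - h t| <= e * `|s - t|.
    by rewrite mulrAC ler_pdivrMr // -mulrA [_ * L]mulrC ler_wpM2l // ltW.
  have := ler_norm (mixed_diff W0 (h t) f (W, h s)); rewrite /mixed_diff /=; lra.
have g0 : g t = 0 by rewrite /g (sup_maximizer W0max) subrr.
have [gd dg0] := differentiable_littleo g0 g_littleo.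
have -> : (fun s => sup [set f W (h s) | W in A]) = (fun s => f W0 (h s)) + g.
  by apply/funext => s; rewrite /g /= addrC subrK.
have fhd : differentiable (fun s => f W0 (h s)) t := differentiable_comp hd fd.
split; first exact: differentiableD.
by rewrite diffD // dg0; apply/funext => v; rewrite /= addr0.
Unshelve. all: by end_near.
Qed.

End Danskin.

Section Cmat.
Variables (R : realType) (K M : nat).
Local Notation T := (cmat R K M).

Lemma differentiable_cmat_re i j (X : T) : differentiable (fun Y : T => Y.1 i j) X.
Proof.
have -> : (fun Y : T => Y.1 i j) = (fun N : 'M[R]_(K, M) => N i j) \o fst by [].
apply: differentiable_comp; last exact: differentiable_coord.
apply: (linear_differentiable (f := fst : {linear T -> 'M[R]_(K, M)})) => Y.
exact: cvg_fst.
Qed.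

Lemma differentiable_cmat_im i j (X : T) : differentiable (fun Y : T => Y.2 i j) X.
Proof.
have -> : (fun Y : T => Y.2 i j) = (fun N : 'M[R]_(K, M) => N i j) \o snd by [].
apply: differentiable_comp; last exact: differentiable_coord.
apply: (linear_differentiable (f := snd : {linear T -> 'M[R]_(K, M)})) => Y.
exact: cvg_snd.
Qed.

Lemma cmat_sq_le_csqnorm (X : T) i j :
  X.1 i j ^+ 2 <= csqnorm X /\ X.2 i j ^+ 2 <= csqnorm X.
Proof.
have sq_ge0 (Y : T) k m : 0 <= Y.1 k m ^+ 2 + Y.2 k m ^+ 2 by rewrite addr_ge0 ?sqr_ge0.
have : X.1 i j ^+ 2 + X.2 i j ^+ 2 <= csqnorm X.
  rewrite /csqnorm (bigD1 i) //= (bigD1 j) //= -addrA lerDl.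
  by rewrite addr_ge0 ?sumr_ge0 // => k _; rewrite sumr_ge0.
by move=> h; split; apply: le_trans h; rewrite ?lerDl ?lerDr sqr_ge0.
Qed.

Lemma normr_le_cnorm (X : T) : `|X| <= cnorm X.
Proof.
suff coord_le x : x ^+ 2 <= csqnorm X -> `|x| <= cnorm X.
  rewrite prod_normE ge_max; apply/andP.
  by split; rewrite [leLHS]/Num.norm /= mx_normrE; apply/bigmax_leP;
    split => [|[i j] _]; rewrite ?sqrtr_ge0 //;
    apply: coord_le; have [] := cmat_sq_le_csqnorm X i j.
by move=> x2; rewrite -sqrtr_sqr /cnorm ler_sqrt // (le_trans (sqr_ge0 x)).
Qed.

Lemma continuous_csqnorm : continuous (@csqnorm R K M).
Proof.
apply: (continuous_big add_continuous) => k _.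
apply: (continuous_big add_continuous) => m _ W.
have re := differentiable_continuous (differentiable_cmat_re k m W).
have im := differentiable_continuous (differentiable_cmat_im k m W).
by apply: (continuousD (f := fun W : T => W.1 k m ^+ 2)); exact: continuousM.
Qed.

Lemma vec_mx_norm_le (v : 'rV[R]_(K * M)) : `|vec_mx v : 'M[R]_(K, M)| <= `|v|.
Proof.
rewrite [leLHS]/Num.norm /= mx_normrE; apply/bigmax_leP; split => // -[i j] _ /=.
have -> : vec_mx v i j = v 0 (mxvec_index i j) by rewrite -[in RHS](vec_mxK v) mxvecE.
rewrite [leRHS]/Num.norm /= mx_normrE.
exact: (le_bigmax _ (fun ij : 'I_1 * 'I_(K * M) => `|v ij.1 ij.2|)
  (0, mxvec_index i j)).
Qed.

Lemma compact_Wset (Pw : R) : 0 <= Pw -> compact (Wset K M Pw).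
Proof.
move=> Pw0; pose r := Pw + 1.
pose box := [set v : 'rV[R]_(K * M) | forall i, `[- r, r]%classic (v ord0 i)].
have box_compact : compact box.
  by apply: (@rV_compact _ _ (fun=> `[- r, r]%classic)) => i; exact: segment_compact.
pose B := (@vec_mx R K M) @` box.
have B_compact : compact B.
  apply: continuous_compact box_compact; apply: continuous_subspaceT.
  by apply: nonexpansive_continuous => u v; rewrite -linearB; exact: vec_mx_norm_le.
apply: (subclosed_compact _ (compact_setX B_compact B_compact)).
  apply: (@preimage_closed _ _ (@csqnorm R K M) [set x | x <= Pw]) => [W _|].
    exact: continuous_csqnorm.
  exact: closed_le.
suff inB (A : 'M[R]_(K, M)) : (forall i j, A i j ^+ 2 <= Pw) -> B A.
  move=> W WP; split; apply: inB => i j; apply: le_trans WP;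
    by have [] := cmat_sq_le_csqnorm W i j.
move=> A2; exists (mxvec A); last by rewrite mxvecK.
move=> k; case/mxvec_indexP: k => i j; rewrite mxvecE /= in_itv /= -ler_norml.
by have := A2 i j; rewrite -real_normK ?num_real // /r; nra.
Qed.

Lemma danskin_regular_herm_abs2 (W0 X0 : T) k j :
  danskin_regular W0 X0 (fun W X => herm_abs2 X W k j).
Proof.
have Wre i m : danskin_regular W0 X0 (fun W (_ : T) => W.1 i m).
  exact/danskin_regular_fst/differentiable_continuous/differentiable_cmat_re.
have Wim i m : danskin_regular W0 X0 (fun W (_ : T) => W.2 i m).
  exact/danskin_regular_fst/differentiable_continuous/differentiable_cmat_im.
have Xre i m : danskin_regular W0 X0 (fun (_ : T) X => X.1 i m).
  exact/danskin_regular_snd/differentiable_cmat_re.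
have Xim i m : danskin_regular W0 X0 (fun (_ : T) X => X.2 i m).
  exact/danskin_regular_snd/differentiable_cmat_im.
have re : danskin_regular W0 X0 (fun W X => herm_re X W k j).
  by apply: danskin_regular_sum => m; apply: danskin_regular_add;
    exact: danskin_regular_mul.
have im : danskin_regular W0 X0 (fun W X => herm_im X W k j).
  apply: danskin_regular_sum => m; apply: danskin_regular_add;
    last apply: danskin_regular_opp; exact: danskin_regular_mul.
by apply: danskin_regular_add; exact: danskin_regular_mul.
Qed.

Variables (alpha sigma2 : 'I_K -> R).
Hypothesis sigma2_gt0 : forall k, 0 < sigma2 k.

Definition interference_noise (W X : T) k :=
  \sum_(j < K | j != k) herm_abs2 X W k j + sigma2 k.

Lemma herm_abs2_ge0 (X W : T) k j : 0 <= herm_abs2 X W k j.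
Proof. by rewrite addr_ge0 ?sqr_ge0. Qed.

Lemma interference_noise_gt0 W X k : 0 < interference_noise W X k.
Proof.
by rewrite ltr_wpDl ?sigma2_gt0 // sumr_ge0 // => j _; exact: herm_abs2_ge0.
Qed.

Lemma sumrateE W X : sumrate alpha sigma2 W X = \sum_(k < K) alpha k / ln 2 *
  (ln (herm_abs2 X W k k + interference_noise W X k) - ln (interference_noise W X k)).
Proof.
apply: eq_bigr => k _; rewrite /log2 -/(interference_noise W X k).
have n0 := interference_noise_gt0 W X k.
have sn0 := ltr_wpDl (herm_abs2_ge0 X W k k) n0.
rewrite -ln_div ?posrE // mulrA [RHS]mulrAC; congr (_ * ln _ / _).
by field; rewrite gt_eqF.
Qed.

Lemma danskin_regular_interference_noise (W0 X0 : T) k :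
  danskin_regular W0 X0 (fun W X => interference_noise W X k).
Proof.
apply: danskin_regular_add; last exact: danskin_regular_cst.
under eq_fun do under eq_fun do rewrite big_mkcond /=.
apply: danskin_regular_sum => j; case: (j != k) => /=.
  exact: danskin_regular_herm_abs2.
exact: danskin_regular_cst.
Qed.

Lemma danskin_regular_sumrate (W0 X0 : T) :
  danskin_regular W0 X0 (sumrate alpha sigma2).
Proof.
have -> : sumrate alpha sigma2 = fun W X => \sum_(k < K) alpha k / ln 2 *
  (ln (herm_abs2 X W k k + interference_noise W X k) - ln (interference_noise W X k)).
  by apply/funext => W; apply/funext => X; exact: sumrateE.
apply: danskin_regular_sum => k; apply: danskin_regular_mul.
  exact: danskin_regular_cst.
apply: danskin_regular_add; last apply: danskin_regular_opp.
  apply: danskin_regular_ln.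
    exact: ltr_wpDl (herm_abs2_ge0 _ _ _ _) (interference_noise_gt0 _ _ _).
  apply: danskin_regular_add; first exact: danskin_regular_herm_abs2.
  exact: danskin_regular_interference_noise.
apply: danskin_regular_ln; first exact: interference_noise_gt0.
exact: danskin_regular_interference_noise.
Qed.

Lemma jointly_continuous_sumrate (W0 X0 : T) :
  jointly_continuous W0 X0 (sumrate alpha sigma2).
Proof. by case: (danskin_regular_sumrate W0 X0). Qed.

End Cmat.

Section Maximizers.
Variables (R : realType) (K M : nat) (Pw : R) (f : cmat R K M -> cmat R K M -> R).
Hypothesis Pw_ge0 : 0 <= Pw.
Hypothesis f_cont : forall W X, jointly_continuous W X f.
Local Notation T := (cmat R K M).

Lemma Wset0 : Wset K M Pw (0 : T).
Proof.
rewrite /Wset /csqnorm /= big1 // => k _; rewrite big1 // => m _.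
by rewrite !mxE expr2 mulr0 addr0.
Qed.

Lemma maximizer_exists X : exists W, argmax f Pw X W.
Proof.
have cont : {within Wset K M Pw, continuous (fun W => f W X)}.
  by apply: continuous_subspaceT => W; exact: jointly_continuous_fix_snd.
have [W WP Wmax] := compact_EVT_max (ex_intro _ _ Wset0) (compact_Wset Pw_ge0) cont.
by exists W; split => [|V VP]; [rewrite -inE | apply: Wmax; rewrite inE].
Qed.

Lemma uniform_near_Wset X0 (e : R) : 0 < e ->
  \forall X \near X0, forall W, Wset K M Pw W -> `|f W X - f W X0| <= e.
Proof.
move=> e0; have e2 : 0 < e / 2 by rewrite divr_gt0.
have := (compact_near_coveringP (Wset K M Pw)).1 (compact_Wset Pw_ge0) T (nbhs X0)
  (fun X W => `|f W X - f W X0| <= e).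
apply=> W _; have := jointly_continuous_near (@f_cont W X0) e2.
move=> [[A B] /= [nA nB] AB]; exists (A, B) => // -[W' X] [/= AW' BX].
have fWX := AB (W', X) (conj AW' BX).
have fWX0 := AB (W', X0) (conj AW' (nbhs_singleton nB)).
have -> : f W' X - f W' X0 = (f W' X - f W X0) - (f W' X0 - f W X0) by ring.
by apply: le_trans (ler_normB _ _) _; rewrite /= in fWX fWX0; lra.
Qed.

Lemma maxval_gap_near X0 W0 (e : R) : argmax f Pw X0 W0 -> 0 < e ->
  \forall X \near X0, maxval f Pw X - f W0 X <= e.
Proof.
move=> W0max e0; have e2 : 0 < e / 2 by rewrite divr_gt0.
apply: filterS (uniform_near_Wset X0 e2) => X unif.
have [V Vmax] := maximizer_exists X.
have fV := unif V Vmax.1; have fW0 := unif W0 W0max.1.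
have V_le_W0 : f V X0 <= f W0 X0 by apply: W0max.2; exact: Vmax.1.
rewrite /maxval (sup_maximizer Vmax).
by move: fV fW0; rewrite !ler_norml => /andP[_ ?] /andP[? _]; lra.
Qed.

Lemma near_maximizer_of_error_bound (Z : topologicalType) (h : Z -> T) t W0
    (c eta : R) : 0 < c -> 0 < eta -> {for t, continuous h} ->
  argmax f Pw (h t) W0 ->
  (\forall s \near t, cdist W0 (argmax f Pw (h s))
     <= c * powR (maxval f Pw (h s) - f W0 (h s)) eta) ->
  forall d : R, 0 < d -> \forall s \near t,
    exists2 W, argmax f Pw (h s) W & `|W - W0| < d.
Proof.
move=> c0 eta0 hc W0max EB d d0; have d2 : 0 < d / 2 by rewrite divr_gt0.
have dc0 : 0 < d / (2 * c) by rewrite divr_gt0 // mulr_gt0.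
pose z := (d / (2 * c)) `^ eta^-1.
have z_eta : z `^ eta = d / (2 * c).
  by rewrite -powRrM mulVf ?gt_eqF // powRr1 // ltW.
have gap_near := maxval_gap_near W0max (powR_gt0 (a := d / (2 * c)) eta^-1 dc0).
near=> s.
have [V Vmax] := maximizer_exists (h s).
have gap0 : 0 <= maxval f Pw (h s) - f W0 (h s).
  by rewrite /maxval (sup_maximizer Vmax) subr_ge0; apply: Vmax.2; exact: W0max.1.
have gap_z : maxval f Pw (h s) - f W0 (h s) <= z by near: s; exact: hc _ gap_near.
have dist_le : cdist W0 (argmax f Pw (h s)) <= d / 2.
  apply: le_trans (_ : c * z `^ eta <= _); last first.
    have cz : c * (d / (2 * c)) = d / 2 by field; rewrite gt_eqF.
    by rewrite z_eta cz.
  apply: le_trans (_ : c * powR (maxval f Pw (h s) - f W0 (h s)) eta <= _).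
    by near: s.
  apply: ler_wpM2l; first exact: ltW.
  by apply: ge0_ler_powR; rewrite ?nnegrE ?powR_ge0 // ltW.
have inf_dist : has_inf [set cnorm (W0 - V') | V' in argmax f Pw (h s)].
  by split; [exists (cnorm (W0 - V)), V | exists 0 => _ [V' _ <-]; exact: sqrtr_ge0].
have [_ [W Wmax <-] Wlt] := inf_adherent d2 inf_dist.
exists W => //; rewrite distrC; apply: le_lt_trans (normr_le_cnorm _) _.
by apply: lt_le_trans Wlt _; rewrite /cdist in dist_le; lra.
Unshelve. all: by end_near.
Qed.

End Maximizers.

Lemma sumrate_danskin (R : realType) (K M : nat) (alpha sigma2 : 'I_K -> R)
    (Pw c eta : R) (Z : normedModType R) (h : Z -> cmat R K M) t W :
  (forall k, 0 < sigma2 k) -> 0 <= Pw -> 0 < c -> 0 < eta ->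
  differentiable h t -> argmax (sumrate alpha sigma2) Pw (h t) W ->
  (\forall s \near t, cdist W (argmax (sumrate alpha sigma2) Pw (h s))
     <= c * powR (maxval (sumrate alpha sigma2) Pw (h s)
                  - sumrate alpha sigma2 W (h s)) eta) ->
  [/\ differentiable (fun s => maxval (sumrate alpha sigma2) Pw (h s)) t,
      differentiable (fun s => sumrate alpha sigma2 W (h s)) t &
      'd (fun s => maxval (sumrate alpha sigma2) Pw (h s)) t
        = 'd (fun s => sumrate alpha sigma2 W (h s)) t :> (Z -> R)].
Proof.
move=> sigma2_gt0 Pw_ge0 c_gt0 eta_gt0 hd Wmax EB.
have [_ _ Gm Gd] := danskin_regular_sumrate alpha sigma2_gt0 W (h t).
have Wnear := near_maximizer_of_error_bound Pw_ge0
  (jointly_continuous_sumrate sigma2_gt0) c_gt0 eta_gt0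
  (differentiable_continuous hd) Wmax EB.
have [maxd dE] := danskin hd Gd Gm Wmax Wnear.
by split => //; exact: differentiable_comp hd Gd.
Qed.

Theorem lemma8 (R : realType) (d : measure_display) (Omega : measurableType d)
  (Prob : probability Omega R)
  (K M S : nat) (alpha sigma2 : 'I_K -> R) (Pw : R)
  (Theta U Theta' Theta'' : set 'rV[R]_S)
  (H : 'rV[R]_S -> Omega -> cmat R K M)
  (BH LH0 LH1 eta : R) (C : 'rV[R]_S -> R) :
  (0 < K)%N -> (0 < M)%N -> (0 < S)%N -> 0 < Pw ->
  (forall k, 0 <= alpha k) -> (forall k, 0 < sigma2 k) ->
  compact Theta -> convex_set Theta -> open U -> Theta `<=` U ->
  (* (A3) *)
  (\forall w \ae Prob,
     [/\ forall t, Theta t -> cnorm (H t w) <= BH,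
         C2_on U (fun t => H t w),
         forall t t', Theta t -> Theta t' ->
           cnorm (H t w - H t' w) <= LH0 * rnorm (t - t') &
         forall t t' v, Theta t -> Theta t' ->
           cnorm ('d (fun s => H s w) t v - 'd (fun s => H s w) t' v)
             <= LH1 * rnorm (t - t') * rnorm v]) ->
  (* real-analyticity *)
  (\forall w \ae Prob, real_analytic_on U (fun t => H t w)) ->
  (* strong second-order sufficient optimality *)
  (forall t, Theta t -> \forall w \ae Prob,
     forall Wst, argmax (sumrate alpha sigma2) Pw (H t w) Wst ->
     exists lam : R, [/\ 0 <= lam,
        csqnorm Wst = Pw -> 0 < lam,
        csqnorm Wst <> Pw -> lam = 0 &
        hessian (fun W => lagrangian (sumrate alpha sigma2) Pw W lam (H t w)) Wst
          \in unitmx]) ->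
  (* error bound *)
  compact Theta'' -> open Theta' ->
  Theta'' `<=` U -> Theta' `<=` Theta'' -> Theta `<=` Theta' ->
  0 < eta -> (forall t, U t -> 0 < C t) ->
  (exists CB : R, forall t, Theta'' t -> C t <= CB) ->
  (\forall w \ae Prob, forall t W, U t -> Wset K M Pw W ->
     cdist W (argmax (sumrate alpha sigma2) Pw (H t w))
       <= C t * powR (maxval (sumrate alpha sigma2) Pw (H t w)
                      - sumrate alpha sigma2 W (H t w)) eta) ->
  (* conclusion *)
  \forall w \ae Prob, forall t, Theta t ->
     differentiable (fun s => maxval (sumrate alpha sigma2) Pw (H s w)) t /\
     forall Wst, argmax (sumrate alpha sigma2) Pw (H t w) Wst ->
       differentiable (fun s => sumrate alpha sigma2 Wst (H s w)) t /\
       forall v, 'd (fun s => maxval (sumrate alpha sigma2) Pw (H s w)) t v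
               = 'd (fun s => sumrate alpha sigma2 Wst (H s w)) t v.
Proof.
move=> _ _ _ Pw_gt0 _ sigma2_gt0 _ _ _ _ hA3 _ _ _ oT' T''U T'T'' TT' eta_gt0 C_gt0
  [CB C_le] hEB.
apply: filterS2 hA3 hEB => w [_ [H_diff _ _] _ _] EBw t Tt.
have tT'' : Theta'' t by apply/T'T''/TT'.
have Hd : differentiable (H ^~ w) t by exact/H_diff/T''U.
have CB_gt0 : 0 < CB by apply: lt_le_trans (C_gt0 t (T''U t tT'')) (C_le t tT'').
have danskin_at W : argmax (sumrate alpha sigma2) Pw (H t w) W ->
  [/\ differentiable (fun s => maxval (sumrate alpha sigma2) Pw (H s w)) t,
      differentiable (fun s => sumrate alpha sigma2 W (H s w)) t &
      'd (fun s => maxval (sumrate alpha sigma2) Pw (H s w)) t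
        = 'd (fun s => sumrate alpha sigma2 W (H s w)) t :> ('rV[R]_S -> R)].
  move=> Wmax; apply: (sumrate_danskin sigma2_gt0 (ltW Pw_gt0) CB_gt0 eta_gt0 Hd Wmax).
  apply: filterS (open_nbhs_nbhs (conj oT' (TT' t Tt))) => s T's.
  apply: le_trans (EBw s W (T''U _ (T'T'' _ T's)) Wmax.1) _.
  by apply: ler_wpM2r; [exact: powR_ge0 | exact/C_le/T'T''].
have [W0 /danskin_at [maxd _ _]] := maximizer_exists (ltW Pw_gt0)
  (jointly_continuous_sumrate (alpha := alpha) sigma2_gt0) (H t w).
split=> // Wst /danskin_at [_ Gd dE]; split=> // v.
by rewrite dE.
Qed.
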